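(* Let $(E,f)$ be a polymatroid that admits a tensor product $(E\times\{1,2,3\},g)$ with $U_{2,3}$. For $A_1,A_2,A_3\subseteq E$ put $s=f(A_1\cup A_2\cup A_3)$, $r_i=f(A_i)$ for $i=1,2,3$, and for $\{i,j,k\}=\{1,2,3\}$ put $s_i=f(A_j\cup A_k)$. Define \[ \alpha(A_1,A_2,A_3)=\min\{r_1+r_2+r_3,\ s_1+s_2+s_3-s\},\qquad \beta(A_1,A_2,A_3)=\max\{s_1+r_1,\ s_2+r_2,\ s_3+r_3\}. \] Then for every $A_1,A_2,A_3\subseteq E$, \[ \beta(A_1,A_2,A_3)\le g\big((A_1\times\{1\})\cup(A_2\times\{2\})\cup(A_3\times\{3\})\big)\le \alpha(A_1,A_2,A_3). \]
   Context: A polymatroid $(E,f)$ consists of a finite ground set $E$ and a function $f\colon 2^E\to\mathbb{R}$ with $f(\emptyset)=0$ that is monotone ($S\subseteq T\Rightarrow f(S)\le f(T)$) and submodular ($f(S)+f(T)\ge f(S\cup T)+f(S\cap T)$). The uniform matroid $U_{2,3}$ is the polymatroid on $\{1,2,3\}$ with rank function $r(T)=\min\{|T|,2\}$. A tensor product of polymatroids $(E_1,f_1)$ and $(E_2,f_2)$ is a polymatroid $(E_1\times E_2,g)$ such that $g(S\times T)=f_1(S)f_2(T)$ for all $S\subseteq E_1$, $T\subseteq E_2$. *)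

From mathcomp Require Import all_boot all_order all_algebra.
From mathcomp Require Import reals.
Set Implicit Arguments. Unset Strict Implicit. Unset Printing Implicit Defensive.
Import Order.TTheory GRing.Theory Num.Theory.
Local Open Scope ring_scope.

Definition polymatroid (R : realDomainType) (E : finType) (f : {set E} -> R) : Prop :=
  [/\ f set0 = 0,
      (forall S T : {set E}, S \subset T -> f S <= f T) &
      (forall S T : {set E}, f (S :|: T) + f (S :&: T) <= f S + f T)].

Definition U23 (R : realDomainType) (T : {set 'I_3}) : R := (minn #|T| 2)%:R.

Definition is_tensor_product (R : realDomainType) (E1 E2 : finType)
  (f1 : {set E1} -> R) (f2 : {set E2} -> R) (g : {set (E1 * E2)} -> R) : Prop :=
  polymatroid g /\
  forall (S : {set E1}) (T : {set E2}), g (setX S T) = f1 S * f2 T.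

(* The three elements 1,2,3 of U_{2,3}'s ground set, as 'I_3 = {0,1,2}. *)
Definition e1 : 'I_3 := @Ordinal 3 0 isT.
Definition e2 : 'I_3 := @Ordinal 3 1 isT.
Definition e3 : 'I_3 := @Ordinal 3 2 isT.

(* Every bound comes from submodularity of g applied to unions of rectangles
   S × T, whose g-values are known: f S if |T| = 1 and 2 f S if |T| >= 2.
   For the upper bound s1 + s2 + s3 - s, put A = A1 ∪ A2 ∪ A3 and
   Y_i = A × {i} ∪ (A_j ∪ A_k) × {1,2,3}, so that g Y_i <= s + s_i; two
   submodular steps on Y_1, Y_2 and Y_3, each with a union covering A × {1,2},
   give 4 s + G <= g Y_1 + g Y_2 + g Y_3.  For the lower bound s_i + r_i,
   with C = A1 ∪ A2 ∪ A3, one first shows f C + s_i <= g(C × {i} ∪ A_j × {j}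
   ∪ A_k × {k}) and then trades C × {i} for A_i × {i} by one more submodular
   step against C × {i}. *)
From mathcomp Require Import all_boot all_order all_algebra.
From mathcomp Require Import reals.
From mathcomp Require Import lra.
Set Implicit Arguments. Unset Strict Implicit. Unset Printing Implicit Defensive.
Import Order.TTheory GRing.Theory Num.Theory.
Local Open Scope ring_scope.

Section Polymatroid.

Variables (R : realDomainType) (E : finType) (h : {set E} -> R).
Hypothesis hP : polymatroid h.

Lemma polymatroid_submodW {P Q U I : {set E}} :
  U \subset P :|: Q -> I \subset P :&: Q -> h U + h I <= h P + h Q.
Proof.
case: hP => _ mono submod sU sI.
by apply: le_trans (submod P Q); apply: lerD; apply: mono.
Qed.

Lemma polymatroid_subadd (P Q : {set E}) : h (P :|: Q) <= h P + h Q.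
Proof.
have := polymatroid_submodW (P := P) (Q := Q) (subxx _) (sub0set (P :&: Q)).
by case: hP => -> _ _; rewrite addr0.
Qed.

End Polymatroid.

(* Membership in the sets below is a boolean combination of tests [x \in A]
   and [c == i]; treating all of them as independent atoms suffices, since
   distinctness of the columns is only needed to evaluate g. *)
Ltac setX_subset :=
  let x := fresh "x" in let c := fresh "c" in
  apply/subsetP => -[x c];
  repeat match goal with H : is_true (_ \subset _) |- _ =>
    move: (subsetP H x); clear H end;
  rewrite !inE /=;
  repeat match goal with |- context[?a \in ?A] => case: (a \in A) end;
  repeat match goal with |- context[c == ?i] => case: (c == i) end;
  done.

Section TensorU23.

Variables (R : realDomainType) (E : finType) (f : {set E} -> R).
Variable g : {set (E * 'I_3)} -> R.
Hypothesis gT : is_tensor_product f (@U23 R) g.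

Let gP : polymatroid g := proj1 gT.

Lemma g_setX1 S i : g (setX S [set i]) = f S.
Proof. by case: gT => _ ->; rewrite /U23 cards1 mulr1. Qed.

Lemma g_setX2 S i j : i != j -> g (setX S [set i; j]) = f S *+ 2.
Proof. by move=> ij; case: gT => _ ->; rewrite /U23 cards2 ij mulr_natr. Qed.

Lemma g_setXT S : g (setX S setT) = f S *+ 2.
Proof. by case: gT => _ ->; rewrite /U23 cardsT card_ord mulr_natr. Qed.

Lemma g_colT_le (B C : {set E}) i :
  B \subset C -> g (setX C [set i] :|: setX B setT) <= f C + f B.
Proof.
move=> BC.
have := polymatroid_submodW gP (U := setX C [set i] :|: setX B setT)
  (I := setX B [set i]) (subxx _).
rewrite g_setXT !g_setX1.
have -> : setX B [set i] \subset setX C [set i] :&: setX B setT by setX_subset.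
by move=> /(_ isT); lra.
Qed.

Lemma g_col2_ge (C D : {set E}) i j : i != j -> D \subset C ->
  f C + f D <= g (setX C [set i] :|: setX D [set j]).
Proof.
move=> ij DC.
have := polymatroid_submodW gP (P := setX C [set i] :|: setX D [set j])
  (Q := setX C [set j]) (U := setX C [set i; j]) (I := setX D [set j]).
rewrite g_setX2 // !g_setX1.
have -> : setX C [set i; j] \subset
  (setX C [set i] :|: setX D [set j]) :|: setX C [set j] by setX_subset.
have -> : setX D [set j] \subset
  (setX C [set i] :|: setX D [set j]) :&: setX C [set j] by setX_subset.
by move=> /(_ isT isT); lra.
Qed.

Lemma g_col3_ge (C A B : {set E}) i j k :
  i != j -> i != k -> A \subset C -> B \subset C ->
  f C + f (A :|: B) <= g (setX C [set i] :|: setX A [set j] :|: setX B [set k]).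
Proof.
move=> ij ik AC BC.
have ABC : A :|: B \subset C by rewrite subUset AC BC.
have lbAB := g_col2_ge ij ABC; have lbB := g_col2_ge ik BC.
have ubB := g_colT_le i BC.
have := polymatroid_submodW gP
  (P := setX C [set i] :|: setX A [set j] :|: setX B [set k])
  (Q := setX C [set i] :|: setX B setT)
  (U := setX C [set i] :|: setX (A :|: B) [set j])
  (I := setX C [set i] :|: setX B [set k]).
have -> : setX C [set i] :|: setX (A :|: B) [set j] \subset
  (setX C [set i] :|: setX A [set j] :|: setX B [set k]) :|:
  (setX C [set i] :|: setX B setT) by setX_subset.
have -> : setX C [set i] :|: setX B [set k] \subset
  (setX C [set i] :|: setX A [set j] :|: setX B [set k]) :&:
  (setX C [set i] :|: setX B setT) by setX_subset.
by move=> /(_ isT isT); lra.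
Qed.

Lemma g_cols_ge (A Aj Ak : {set E}) i j k : i != j -> i != k ->
  f (Aj :|: Ak) + f A <= g (setX A [set i] :|: setX Aj [set j] :|: setX Ak [set k]).
Proof.
move=> ij ik.
pose C := A :|: (Aj :|: Ak).
have lbC : f C + f (Aj :|: Ak) <=
    g (setX C [set i] :|: setX Aj [set j] :|: setX Ak [set k]).
  by apply: g_col3_ge; rewrite // /C subsetU // ?subsetUl ?subsetUr ?orbT.
have := polymatroid_submodW gP
  (P := setX A [set i] :|: setX Aj [set j] :|: setX Ak [set k])
  (Q := setX C [set i])
  (U := setX C [set i] :|: setX Aj [set j] :|: setX Ak [set k])
  (I := setX A [set i]).
rewrite !g_setX1.
have -> : setX C [set i] :|: setX Aj [set j] :|: setX Ak [set k] \subset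
  (setX A [set i] :|: setX Aj [set j] :|: setX Ak [set k]) :|: setX C [set i]
  by rewrite /C; setX_subset.
have -> : setX A [set i] \subset
  (setX A [set i] :|: setX Aj [set j] :|: setX Ak [set k]) :&: setX C [set i]
  by rewrite /C; setX_subset.
by move=> /(_ isT isT); lra.
Qed.

Lemma g_cols_le_sum (A1 A2 A3 : {set E}) i j k :
  g (setX A1 [set i] :|: setX A2 [set j] :|: setX A3 [set k])
    <= f A1 + f A2 + f A3.
Proof.
apply: le_trans (polymatroid_subadd gP _ _) _.
rewrite g_setX1 lerD2r -(g_setX1 A1 i) -(g_setX1 A2 j).
exact: polymatroid_subadd.
Qed.

Lemma g_cols_le_pairs (A1 A2 A3 : {set E}) i j k : i != j ->
  g (setX A1 [set i] :|: setX A2 [set j] :|: setX A3 [set k])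
    <= f (A2 :|: A3) + f (A1 :|: A3) + f (A1 :|: A2) - f (A1 :|: A2 :|: A3).
Proof.
move=> ij; set A := A1 :|: A2 :|: A3.
pose Y (l : 'I_3) (B : {set E}) := setX A [set l] :|: setX B setT.
have ubY l (B : {set E}) : B \subset A -> g (Y l B) <= f A + f B by exact: g_colT_le.
have ub1 := ubY i (A2 :|: A3) ltac:(by rewrite /A -setUA subsetUr).
have ub2 := ubY j (A1 :|: A3) ltac:(by rewrite /A setUAC subsetUl).
have ub3 := ubY k (A1 :|: A2) (subsetUl _ _).
have cover1 : setX A [set i; j] \subset Y i (A2 :|: A3) :|: Y j (A1 :|: A3).
  by rewrite /Y /A; setX_subset.
have cover2 : setX A [set i; j] \subset
    (Y i (A2 :|: A3) :&: Y j (A1 :|: A3)) :|: Y k (A1 :|: A2).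
  by rewrite /Y /A; setX_subset.
have inside : setX A1 [set i] :|: setX A2 [set j] :|: setX A3 [set k] \subset
    (Y i (A2 :|: A3) :&: Y j (A1 :|: A3)) :&: Y k (A1 :|: A2).
  by rewrite /Y /A; setX_subset.
have := polymatroid_submodW gP cover1 (subxx _).
have := polymatroid_submodW gP cover2 inside.
rewrite g_setX2 //; clear cover1 cover2 inside; lra.
Qed.

End TensorU23.

Theorem proposition4p2 (R : realType) (E : finType) (f : {set E} -> R)
  (g : {set (E * 'I_3)} -> R) :
  polymatroid f ->
  is_tensor_product f (@U23 R) g ->
  forall A1 A2 A3 : {set E},
    let s := f (A1 :|: A2 :|: A3) in
    let r1 := f A1 in let r2 := f A2 in let r3 := f A3 in
    let s1 := f (A2 :|: A3) in let s2 := f (A1 :|: A3) in let s3 := f (A1 :|: A2) in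
    let alpha := Num.min (r1 + r2 + r3) (s1 + s2 + s3 - s) in
    let beta := Num.max (s1 + r1) (Num.max (s2 + r2) (s3 + r3)) in
    let G := g (setX A1 [set e1] :|: setX A2 [set e2]
                :|: setX A3 [set e3]) in
    beta <= G /\ G <= alpha.
Proof.
move=> _ gT A1 A2 A3 s r1 r2 r3 s1 s2 s3 alpha beta G.
split.
  rewrite /beta !ge_max; apply/and3P; split.
  - exact: (g_cols_ge gT A1 A2 A3 (i := e1) (j := e2) (k := e3)).
  - rewrite /G (setUC (setX A1 _)).
    exact: (g_cols_ge gT A2 A1 A3 (i := e2) (j := e1) (k := e3)).
  - rewrite /G setUAC (setUC (setX A1 _)).
    exact: (g_cols_ge gT A3 A1 A2 (i := e3) (j := e1) (k := e2)).
rewrite /alpha le_min; apply/andP; split.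
  exact: g_cols_le_sum.
exact: g_cols_le_pairs.
Qed.
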